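(* Let $S$ be a numerical semigroup with multiplicity $e$ and blowup $B$. If ${\rm adj}(S)=\operatorname{Ap}(B;e)$ and $B$ is symmetric, then ${\rm d}_{\max}(S)=d(F(B)+e;B^{\mathcal D})$.
   Context: $S$ is a numerical semigroup (a submonoid of $\mathbb N$ with finite complement) with minimal generators $e<a_1<\dots<a_t$. An $S$-factorization of $n$ is $(c_0,\dots,c_t)\in\mathbb N^{t+1}$ with $c_0e+\sum c_ia_i=n$, of length $\sum c_i$. ${\rm ord}(n;S)$ is the maximal such length, ${\rm d}_{\max}(n;S)$ is the number of factorizations of maximal length, and ${\rm d}_{\max}(S)=\max_{n\in S}{\rm d}_{\max}(n;S)$. ${\rm adj}(S)=\{s-{\rm ord}(s;S)e:s\in S\}$. The blowup is $B=\langle e,d_1,\dots,d_t\rangle$ with $d_i=a_i-e$, and $\mathcal D=(e,d_1,\dots,d_t)$. $d(b;B^{\mathcal D})$ is the number of tuples $(x_0,\dots,x_t)\in\mathbb N^{t+1}$ with $x_0e+\sum x_id_i=b$. $\operatorname{Ap}(B;e)=\{w\in B:w-e\notin B\}$. $F(B)$ is the largest integer not in $B$. $B$ is symmetric if, whenever $x+y=F(B)$ with $x,y\in\mathbb Z$, exactly one of $x,y$ lies in $B$. *)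

From mathcomp Require Import all_boot all_order all_algebra.
Set Implicit Arguments. Unset Strict Implicit. Unset Printing Implicit Defensive.
Import Order.TTheory GRing.Theory Num.Theory.

Definition num_semigroup (S : nat -> bool) : Prop :=
  [/\ S 0, (forall x y, S x -> S y -> S (x + y)) & exists N, forall n, N <= n -> S n].

Definition min_gen (S : nat -> bool) (x : nat) : Prop :=
  [/\ S x, 0 < x & ~ exists y z, [/\ S y, S z, 0 < y, 0 < z & x = y + z]].

Fixpoint tuples (k n : nat) : seq (seq nat) :=
  match k with
  | 0 => [:: [::]]
  | k'.+1 => [seq x :: t | x <- iota 0 n.+1, t <- tuples k' n]
  end.

Definition dot (c g : seq nat) : nat := sumn [seq p.1 * p.2 | p <- zip c g].

(* Factorizations (c_0,...,c_t) of n with respect to the generator tuple g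
   (all generators positive, so every coordinate is <= n). *)
Definition facts (g : seq nat) (n : nat) : seq (seq nat) :=
  [seq c <- tuples (size g) n | dot c g == n].

Definition nrep (g : seq nat) (n : nat) : nat := size (facts g n).

Definition in_sg (g : seq nat) (n : nat) : bool := 0 < nrep g n.

Definition ord (g : seq nat) (n : nat) : nat := \max_(c <- facts g n) sumn c.

Definition dmax (g : seq nat) (n : nat) : nat :=
  count (fun c => sumn c == ord g n) (facts g n).

Definition is_dmax_S (S : nat -> bool) (g : seq nat) (v : nat) : Prop :=
  (exists2 n, S n & dmax g n = v) /\ (forall n, S n -> dmax g n <= v).

Definition adj (S : nat -> bool) (g : seq nat) (e x : nat) : Prop :=
  exists2 s, S s & x = s - ord g s * e.

Definition apery (B : nat -> bool) (e w : nat) : bool :=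
  B w && ((e <= w) ==> ~~ B (w - e)).

(* generators of the blowup: (e, a_1 - e, ..., a_t - e) *)
Definition blowup_gens (e : nat) (a : seq nat) : seq nat :=
  e :: [seq x - e | x <- a].

Definition inZ (B : nat -> bool) (z : int) : bool :=
  match z with Posz n => B n | Negz _ => false end.

Definition is_frob (B : nat -> bool) (f : int) : Prop :=
  ~~ inZ B f /\ (forall z : int, (f < z)%R -> inZ B z).

Definition symmetric_sg (B : nat -> bool) (f : int) : Prop :=
  forall x y : int, (x + y)%R = f -> inZ B x != inZ B y.

(* d(b; B^D) extended by 0 to negative b *)
Definition nrepZ (g : seq nat) (b : int) : nat :=
  match b with Posz n => nrep g n | Negz _ => 0 end.

From mathcomp Require Import all_boot all_order all_algebra.
From mathcomp Require Import zify.
Set Implicit Arguments. Unset Strict Implicit. Unset Printing Implicit Defensive.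

(* Write D = (e, a_1 - e, ..., a_t - e) and B = <D>.  A factorization
   (c_0, c') of n in S of length k gives the factorization (0, c') of
   n - k e in B, so d_max(n;S) <= d(n - ord(n;S) e; B^D), and n - ord(n;S) e
   lies in adj(S) = Ap(B;e).  For w := F(B) + e and r in Ap(B;e), symmetry
   puts w - r in B (as r - e is not), hence d(r;B^D) <= d(w;B^D).  Conversely
   every factorization of w in B has c_0 = 0 since w - e = F(B) is not in B;
   lifting these to length w factorizations of n := w + w e shows
   d_max(n;S) >= d(w;B^D), because no factorization of n is longer than w,
   again as w - e is not in B. *)

Lemma dot_cons x c y g : dot (x :: c) (y :: g) = x * y + dot c g.
Proof. by []. Qed.

Lemma dot_nseq0 k g : dot (nseq k 0) g = 0.
Proof. by elim: k g => [|k IH] [|y g] //=; rewrite dot_cons IH. Qed.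

Lemma mem_tuples k n c :
  (c \in tuples k n) = (size c == k) && all (fun x => x <= n) c.
Proof.
elim: k c => [|k IH] [|x c] //; rewrite {1}/tuples -/tuples [RHS]/=.
  by apply/negbTE/negP => /allpairsP [[y t] [_ _ //]].
rewrite eqSS; apply/allpairsP/idP => [[[y t] [Hy Ht [-> ->]]]|].
  by move: Hy Ht; rewrite IH mem_iota ltnS => /= -> /andP[-> ->].
move=> /andP[Hs /andP[Hx Ha]]; exists (x, c).
by rewrite mem_iota ltnS Hx IH Hs Ha.
Qed.

Lemma uniq_tuples k n : uniq (tuples k n).
Proof.
elim: k => [|k IH] //; rewrite /tuples -/tuples.
apply: allpairs_uniq => //; first exact: iota_uniq.
by move=> [x t] [y u] _ _ /= [-> ->].
Qed.

Lemma sumn_le_dot c g : size c = size g -> all (fun y => 0 < y) g ->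
  sumn c <= dot c g.
Proof.
elim: c g => [|x c IH] [|y g] //= [Hs] /andP[Hy Hg]; rewrite dot_cons.
by have := leq_pmulr x Hy; have := IH g Hs Hg; lia.
Qed.

Lemma entries_le_dot c g : size c = size g -> all (fun y => 0 < y) g ->
  all (fun x => x <= dot c g) c.
Proof.
elim: c g => [|x c IH] [|y g] //= [Hs] /andP[Hy Hg]; rewrite dot_cons.
apply/andP; split; first by have := leq_pmulr x Hy; lia.
by apply/allP => z /(allP (IH g Hs Hg)); lia.
Qed.

Lemma dot_submonoid (S : nat -> bool) c g : S 0 ->
  (forall x y, S x -> S y -> S (x + y)) -> all S g -> S (dot c g).
Proof.
move=> S0 SD; elim: c g => [|x c IH] [|y g] // /andP[Sy Sg].
rewrite dot_cons; apply: (SD) (IH g Sg).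
by elim: x => [|x IHx] //; rewrite mulSn; apply: SD.
Qed.

Section Factorizations.
Variable g : seq nat.
Hypothesis g_pos : all (fun y => 0 < y) g.

Lemma mem_facts n c : (c \in facts g n) = (size c == size g) && (dot c g == n).
Proof.
rewrite mem_filter mem_tuples.
apply/idP/idP => [/andP[-> /andP[-> _]] //|/andP[/eqP Hs /eqP Hd]].
by rewrite Hd Hs !eqxx -Hd entries_le_dot.
Qed.

Lemma in_sgP n : reflect (exists c, c \in facts g n) (in_sg g n).
Proof.
rewrite /in_sg /nrep -has_predT.
by apply: (iffP hasP) => [[c Hc _]|[c Hc]]; exists c.
Qed.

Lemma size_facts n c : c \in facts g n -> size c = size g.
Proof. by rewrite mem_filter mem_tuples => /and3P[_ /eqP]. Qed.

Lemma uniq_facts n : uniq (facts g n).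
Proof. exact/filter_uniq/uniq_tuples. Qed.

Definition addl (s t : seq nat) := [seq p.1 + p.2 | p <- zip s t].

Lemma addl_cons x s y t : addl (x :: s) (y :: t) = x + y :: addl s t.
Proof. by []. Qed.

Lemma size_addl s t : size s = size t -> size (addl s t) = size s.
Proof. by move=> Hst; rewrite size_map size1_zip ?Hst. Qed.

Lemma dot_addl s t h : size s = size h -> size t = size h ->
  dot (addl s t) h = dot s h + dot t h.
Proof.
elim: s t h => [|x s IH] [|y t] [|z h] // [H1] [H2].
by rewrite addl_cons !dot_cons IH // mulnDl; lia.
Qed.

Lemma addl_inj s t u : size s = size u -> size t = size u ->
  addl s u = addl t u -> s = t.
Proof.
elim: s t u => [|x s IH] [|y t] [|z u] // [H1] [H2]; rewrite !addl_cons => -[H3 H4].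
by rewrite (IH t u H1 H2 H4); congr cons; lia.
Qed.

(* Adding a fixed factorization of y is injective on factorizations of x. *)
Lemma leq_nrep_addr x y : in_sg g y -> nrep g x <= nrep g (x + y).
Proof.
move=> /in_sgP[v]; rewrite mem_facts => /andP[/eqP Hv /eqP Hdv].
rewrite /nrep -(size_map (addl^~ v)); apply: uniq_leq_size.
  rewrite map_inj_in_uniq ?uniq_facts // => s t.
  by rewrite !mem_facts => /andP[/eqP Hs _] /andP[/eqP Ht _]; apply: addl_inj; rewrite Hv.
move=> z /mapP[s]; rewrite mem_facts => /andP[/eqP Hs /eqP Hds] ->.
by rewrite mem_facts size_addl ?Hs ?Hv // dot_addl // Hds Hdv !eqxx.
Qed.

Lemma in_sgD x y : in_sg g x -> in_sg g y -> in_sg g (x + y).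
Proof. by move=> Hx Hy; apply: leq_trans Hx (leq_nrep_addr x Hy). Qed.

Lemma in_sg_of_dmax n : 0 < dmax g n -> in_sg g n.
Proof. by move/leq_trans; apply; apply: count_size. Qed.

Lemma in_submonoid (S : nat -> bool) n : S 0 ->
  (forall x y, S x -> S y -> S (x + y)) -> all S g -> in_sg g n -> S n.
Proof.
move=> S0 SD Sg /in_sgP[c]; rewrite mem_facts => /andP[_ /eqP <-].
exact: dot_submonoid.
Qed.

End Factorizations.

Lemma in_sg_mul_head x g m : all (fun y => 0 < y) (x :: g) ->
  in_sg (x :: g) (m * x).
Proof.
move=> Hg; apply/in_sgP; exists (m :: nseq (size g) 0).
by rewrite mem_facts // dot_cons dot_nseq0 addn0 /= size_nseq !eqxx.
Qed.

Lemma frob_add_apery (B : nat -> bool) F e : is_frob B F -> 0 < e ->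
  exists2 w, (F + e%:Z)%R = Posz w & apery B e w.
Proof.
move=> [BF Bgt] e0; have : inZ B (F + e%:Z) by apply: Bgt; lia.
case Fe: (F + e%:Z)%R => [w|w] //= Bw; exists w => //.
rewrite /apery Bw; apply/implyP => ew.
have Fw : F = Posz (w - e) by lia.
by rewrite Fw in BF.
Qed.

Lemma apery_symmetric_sub (B : nat -> bool) F e w r : symmetric_sg B F ->
  (F + e%:Z)%R = Posz w -> apery B e r -> r <= w /\ B (w - r).
Proof.
move=> Bsym Fw /andP[_ Br].
have Nre : inZ B (r%:Z - e%:Z) = false.
  case: (leqP e r) => er; last by have -> : (r%:Z - e%:Z)%R = Negz (e - r).-1 by lia.
  have -> : (r%:Z - e%:Z)%R = Posz (r - e) by lia.
  exact: negbTE (implyP Br er).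
have Fsplit : (r%:Z - e%:Z + (w%:Z - r%:Z))%R = F by lia.
have : inZ B (w%:Z - r%:Z) by have := Bsym _ _ Fsplit; rewrite Nre; case: inZ.
case: (leqP r w) => rw; last by have -> : (w%:Z - r%:Z)%R = Negz (r - w).-1 by lia.
by have -> : (w%:Z - r%:Z)%R = Posz (w - r) by lia.
Qed.

Lemma nrep_le_apery g F e w r : all (fun y => 0 < y) g ->
  symmetric_sg (in_sg g) F -> (F + e%:Z)%R = Posz w -> apery (in_sg g) e r ->
  nrep g r <= nrep g w.
Proof.
move=> g_pos Bsym Fw Ar; have [rw Bwr] := apery_symmetric_sub Bsym Fw Ar.
by rewrite -(subnKC rw); apply: leq_nrep_addr.
Qed.

Section Blowup.
Variables (e : nat) (a : seq nat).
Hypotheses (e_gt0 : 0 < e) (a_gt_e : all (fun x => e < x) a).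
Local Notation D := (blowup_gens e a).
Local Notation B := (in_sg (blowup_gens e a)).

Lemma blowup_gens_pos : all (fun y => 0 < y) D.
Proof. by rewrite /= e_gt0 all_map; apply: sub_all a_gt_e => x /=; rewrite subn_gt0. Qed.

Lemma gens_pos : all (fun y => 0 < y) (e :: a).
Proof. by rewrite /= e_gt0; apply: sub_all a_gt_e => x /=; apply: leq_ltn_trans. Qed.

Lemma dot_blowup cs : size cs = size a ->
  dot cs a = dot cs [seq x - e | x <- a] + sumn cs * e.
Proof.
elim: cs a a_gt_e => [|x cs IH] [|y a'] //= /andP[ey a'e] [Hs].
rewrite !dot_cons (IH a' a'e Hs) -[in LHS](subnK (ltnW ey)) mulnDr mulnDl; lia.
Qed.

Lemma facts_blowup n c : c \in facts (e :: a) n ->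
  0 :: behead c \in facts D (n - sumn c * e) /\ sumn c * e <= n.
Proof.
rewrite mem_facts ?gens_pos //; case: c => [|x cs] // /andP[/eqP[Hs] /eqP <-].
rewrite dot_cons (dot_blowup Hs) mem_facts ?blowup_gens_pos //= size_map Hs.
by rewrite dot_cons /= mulnDl; split; [apply/eqP; lia | lia].
Qed.

Lemma lift_facts_blowup w K cs : 0 :: cs \in facts D w -> sumn cs <= K ->
  (K - sumn cs) :: cs \in facts (e :: a) (w + K * e).
Proof.
rewrite !mem_facts ?blowup_gens_pos ?gens_pos //= size_map dot_cons.
move=> /andP[/eqP[Hs] /eqP <-] csK; rewrite Hs eqxx dot_cons (dot_blowup Hs).
by rewrite -[in K * e](subnK csK) mulnDl; apply/eqP; lia.
Qed.

Lemma dmax_le_nrep n : dmax (e :: a) n <= nrep D (n - ord (e :: a) n * e).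
Proof.
rewrite /dmax -size_filter /nrep -(size_map (fun c => 0 :: behead c)).
apply: uniq_leq_size.
  rewrite map_inj_in_uniq; first exact/filter_uniq/uniq_facts.
  move=> c1 c2; rewrite [c1 \in _]mem_filter [c2 \in _]mem_filter.
  move=> /andP[/eqP k1 /size_facts s1] /andP[/eqP k2 /size_facts s2].
  case: c1 c2 k1 k2 s1 s2 => [|x1 cs1] [|x2 cs2] //= k1 k2 _ _ [E].
  by move: k1 k2; rewrite E => <- k; congr cons; lia.
move=> z /mapP[c]; rewrite mem_filter => /andP[/eqP <- /facts_blowup[Hc _]] ->.
exact: Hc.
Qed.

Lemma apery_facts_head0 w x : apery B e w -> x \in facts D w -> x = 0 :: behead x.
Proof.
move=> /andP[_ Aw]; rewrite mem_facts ?blowup_gens_pos //.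
case: x => [|[|x0] xs] //= /andP[/eqP[Hs] /eqP]; rewrite dot_cons mulSn => Hw.
have ew : e <= w by lia.
case/negP: (implyP Aw ew); apply/in_sgP; exists (x0 :: xs).
by rewrite mem_facts ?blowup_gens_pos //= Hs dot_cons eqxx; apply/eqP; lia.
Qed.

Lemma facts_length_le_apery w K c : apery B e w ->
  c \in facts (e :: a) (w + K * e) -> sumn c <= K.
Proof.
move=> /andP[_ Aw] /facts_blowup[Bn kn].
rewrite leqNgt; apply/negP => Kk; set k := sumn c in Bn kn Kk.
have ke : k * e = K * e + (k - K.+1) * e + e.
  by rewrite -[in LHS](subnKC Kk) mulnDl mulSn; lia.
have ew : e <= w by lia.
have Ewe : w + K * e - k * e + (k - K.+1) * e = w - e by lia.
case/negP: (implyP Aw ew); rewrite -Ewe.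
apply: (in_sgD blowup_gens_pos); first by apply/in_sgP; exists (0 :: behead c).
exact: in_sg_mul_head blowup_gens_pos.
Qed.

Lemma nrep_le_dmax_apery w K : apery B e w -> w <= K ->
  nrep D w <= dmax (e :: a) (w + K * e).
Proof.
move=> Aw wK; pose lift x := (K - sumn (behead x)) :: behead x.
have lift_facts x : x \in facts D w ->
    lift x \in facts (e :: a) (w + K * e) /\ sumn (lift x) = K.
  move=> Hx; have Ex := apery_facts_head0 Aw Hx; rewrite Ex in Hx.
  have xK : sumn (behead x) <= K.
    apply: leq_trans wK; move: (Hx); rewrite mem_facts ?blowup_gens_pos //.
    move=> /andP[/eqP Hs /eqP <-]; exact: (sumn_le_dot Hs blowup_gens_pos).
  by split; [apply: lift_facts_blowup | rewrite /= subnK].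
have ordK : ord (e :: a) (w + K * e) = K.
  apply/eqP; rewrite eqn_leq; apply/andP; split.
    by apply/bigmax_leqP_seq => c Hc _; apply: facts_length_le_apery Aw Hc.
  have /in_sgP[x Hx] := (andP Aw).1.
  have [Hl lK] := lift_facts x Hx.
  by rewrite -{1}lK; apply: leq_bigmax_seq Hl _.
rewrite /dmax -size_filter /nrep -(size_map lift); apply: uniq_leq_size.
  rewrite map_inj_in_uniq ?uniq_facts // => x y Hx Hy [_ Exy].
  by rewrite (apery_facts_head0 Aw Hx) (apery_facts_head0 Aw Hy) Exy.
move=> z /mapP[x Hx ->]; have [H1 H2] := lift_facts x Hx.
by rewrite mem_filter ordK H2 eqxx H1.
Qed.

End Blowup.

Theorem corollary4p5 (S : nat -> bool) (e : nat) (a : seq nat) (F : int) :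
  num_semigroup S ->
  sorted ltn (e :: a) ->
  (forall x, x \in e :: a <-> min_gen S x) ->
  is_frob (in_sg (blowup_gens e a)) F ->
  (forall x, adj S (e :: a) e x <-> apery (in_sg (blowup_gens e a)) e x) ->
  symmetric_sg (in_sg (blowup_gens e a)) F ->
  is_dmax_S S (e :: a) (nrepZ (blowup_gens e a) (F + (e : int))%R).
Proof.
move=> [S0 SD _] sorted_gens gensS frobB adjS symB.
have [_ e_gt0 _] := (gensS e).1 (mem_head _ _).
have a_gt_e : all (fun x => e < x) a := order_path_min ltn_trans sorted_gens.
have [w Fw Aw] := frob_add_apery frobB e_gt0; rewrite Fw.
have dmax_le n : S n -> dmax (e :: a) n <= nrep (blowup_gens e a) w.
  move=> Sn; apply: leq_trans (dmax_le_nrep e_gt0 a_gt_e n) _.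
  apply: nrep_le_apery (blowup_gens_pos e_gt0 a_gt_e) symB Fw _.
  by apply/adjS; exists n.
have le_dmax := nrep_le_dmax_apery e_gt0 a_gt_e Aw (leqnn w).
have Sn : S (w + w * e).
  apply: (in_submonoid (gens_pos e_gt0 a_gt_e) S0 SD).
    by apply/allP => x /gensS[].
  exact/in_sg_of_dmax/(leq_trans (andP Aw).1 le_dmax).
split=> //; exists (w + w * e) => //.
by apply/eqP; rewrite eqn_leq dmax_le.
Qed.
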